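(* Let $E$ be an equivalence relation on a Polish space $X$. If $E$ is Borel graphable, then its Friedman–Stanley jump $E^+$ is also Borel graphable.
   Context: $E$ is Borel graphable if there is a Borel simple undirected graph $G\subseteq X\times X$ whose connectedness relation (connected by a finite path) equals $E$. The Friedman–Stanley jump $E^+$ is the equivalence relation on $X^\mathbb{N}$ given by $(x_i)E^+(y_i)$ iff $\{[x_i]_E:i\in\mathbb{N}\}=\{[y_i]_E:i\in\mathbb{N}\}$. *)

From HB Require Import structures.
From Stdlib Require Import Relations.Relation_Operators.
From mathcomp Require Import all_boot all_order all_algebra.
From mathcomp Require Import all_classical all_reals all_analysis.
From mathcomp Require Import Rstruct Rstruct_topology.
Set Implicit Arguments. Unset Strict Implicit. Unset Printing Implicit Defensive.
Import Order.TTheory GRing.Theory Num.Theory.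
Local Open Scope classical_set_scope.
Local Open Scope ring_scope.

Notation RR := Rdefinitions.R.

Definition is_metric (T : Type) (d : T -> T -> RR) : Prop :=
  (forall x y, 0 <= d x y) /\ (forall x y, d x y = 0 <-> x = y) /\
  (forall x y, d x y = d y x) /\ (forall x y z, d x z <= d x y + d y z).

Definition metric_compatible (T : topologicalType) (d : T -> T -> RR) : Prop :=
  forall A : set T, open A <->
    (forall x, A x -> exists e : RR, 0 < e /\ (forall y, d x y < e -> A y)).

Definition metric_complete (T : Type) (d : T -> T -> RR) : Prop :=
  forall u : nat -> T,
    (forall e : RR, 0 < e -> exists N, forall m n, (N <= m)%N -> (N <= n)%N ->
        d (u m) (u n) < e) ->
    exists l, forall e : RR, 0 < e -> exists N, forall n, (N <= n)%N -> d (u n) l < e.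

Definition polish (T : topologicalType) : Prop :=
  (exists D : set T, countable D /\ dense D) /\
  (exists d : T -> T -> RR, is_metric d /\ metric_compatible d /\ metric_complete d).

Definition borel (T : topologicalType) : set (set T) := <<s (@open T) >>.

Definition is_equivalence_rel (T : Type) (E : T -> T -> Prop) : Prop :=
  (forall x, E x x) /\ (forall x y, E x y -> E y x) /\
  (forall x y z, E x y -> E y z -> E x z).

Definition connectedness (T : Type) (G : set (T * T)) : T -> T -> Prop :=
  clos_refl_trans T (fun a b => G (a, b)).

Definition borel_graphable (T : topologicalType) (E : T -> T -> Prop) : Prop :=
  exists G : set (T * T),
    borel G /\
    (forall x y, G (x, y) -> G (y, x)) /\
    (forall x, ~ G (x, x)) /\
    (forall x y, connectedness G x y <-> E x y).

Definition fs_jump (T : topologicalType) (E : T -> T -> Prop) :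
    {ptws nat -> T} -> {ptws nat -> T} -> Prop :=
  fun x y => range (fun i => (E (x i) : set T)) = range (fun i => (E (y i) : set T)).

From Stdlib Require Import Relations.Relation_Operators Relations.Operators_Properties Cantor.
From mathcomp Require Import all_boot all_order all_algebra.
From mathcomp Require Import all_classical all_reals all_analysis.
From mathcomp Require Import Rstruct lra.
Import Order.TTheory.
Local Open Scope classical_set_scope.
Local Open Scope ring_scope.
Set Implicit Arguments. Unset Strict Implicit.

(* A point z of X^N splits, via Cantor pairing and parity, into two countable
   families of sequences ("lines") in X. Call z a witness for x when every line
   is a G-walk that may pause, every line meets a line of the other family, and
   each x_i lies on the i-th line of one family. A witness of x is
   E^+-equivalent to x; conversely, if x E^+ y, walks from each x_i to some y_j
   and from each y_j to some x_i interleave into a common witness of x and y.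
   Hence E^+ is the connectedness relation of the graph joining distinct x, z
   when one witnesses the other. Witnessing is a countable Boolean combination
   of G-edges and equalities between coordinates, so this graph is Borel once
   X is Hausdorff, which a Polish space is. *)

Section BorelPredicates.
Variable T : topologicalType.

Lemma borel_open (A : set T) : open A -> borel A.
Proof. exact: sub_sigma_algebra. Qed.

Lemma borel_not (P : T -> Prop) : borel [set w | P w] -> borel [set w | ~ P w].
Proof. by move=> hP; rewrite -[X in borel X]setTD; exact: sigma_algebraCD. Qed.

Lemma borel_ex (I : countType) (P : I -> T -> Prop) :
  (forall i, borel [set w | P i w]) -> borel [set w | exists i, P i w].
Proof.
move=> hP.
have -> : [set w | exists i, P i w] =
    \bigcup_n [set w | oapp (P^~ w) False (unpickle n)].
  apply/seteqP; split=> [w [i Piw]|w [n _]].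
    by exists (pickle i); rewrite //= pickleK.
  by case: (unpickle n) => [i|] //= Piw; exists i.
rewrite /borel; apply: sigma_algebra_bigcup => n.
by case: unpickle => [i|] /=; [exact: hP|exact: sigma_algebra0].
Qed.

Lemma borel_all (I : countType) (P : I -> T -> Prop) :
  (forall i, borel [set w | P i w]) -> borel [set w | forall i, P i w].
Proof.
move=> hP; have -> : [set w | forall i, P i w] = [set w | ~ exists i, ~ P i w].
  apply/seteqP; split=> w /= => [Pw [i]|nPw i]; first exact.
  by apply: contrapT => nPi; apply: nPw; exists i.
by apply: borel_not; apply: borel_ex => i; exact: borel_not.
Qed.

Lemma borel_or (P Q : T -> Prop) :
  borel [set w | P w] -> borel [set w | Q w] -> borel [set w | P w \/ Q w].
Proof.
move=> hP hQ.
have -> : [set w | P w \/ Q w] = [set w | exists b : bool, if b then P w else Q w].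
  apply/seteqP; split=> w /= => [[]|[[]]]; by [exists true|exists false|left|right].
by apply: borel_ex => -[].
Qed.

Lemma borel_and (P Q : T -> Prop) :
  borel [set w | P w] -> borel [set w | Q w] -> borel [set w | P w /\ Q w].
Proof.
move=> hP hQ.
have -> : [set w | P w /\ Q w] = [set w | forall b : bool, if b then P w else Q w].
  apply/seteqP; split=> w /= => [[Pw Qw] []|PQw] //.
  by split; [exact: (PQw true)|exact: (PQw false)].
by apply: borel_all => -[].
Qed.

Lemma borel_preimage (U : topologicalType) (f : T -> U) (A : set U) :
  continuous f -> borel A -> borel (f @^-1` A).
Proof.
move=> fc; apply: (@smallest_sub _ _ _ [set B | borel (f @^-1` B)]) => [|B oB] /=.
  split=> [|B hB|F hF] /=; first by rewrite preimage_set0; exact: sigma_algebra0.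
    by rewrite setTD preimage_setC -setTD; exact: sigma_algebraCD.
  by rewrite preimage_bigcup; exact: sigma_algebra_bigcup.
by apply: borel_open; apply: open_comp => // x _; exact: fc.
Qed.

End BorelPredicates.

Lemma continuous_pair (T U V : topologicalType) (f : T -> U) (g : T -> V) :
  continuous f -> continuous g -> continuous (fun w => (f w, g w)).
Proof. by move=> fc gc w; apply: cvg_pair; [exact: fc|exact: gc]. Qed.

Lemma continuous_coord (T X : topologicalType) (p : T -> {ptws nat -> X}) (n : nat) :
  continuous p -> continuous (fun w => p w n).
Proof. by move=> pc w; exact: continuous_comp (pc w) (@proj_continuous _ _ n (p w)). Qed.

Lemma hausdorff_open_neq (T : topologicalType) :
  hausdorff_space T -> open [set p : T * T | p.1 <> p.2].
Proof.
rewrite open_hausdorff => hT; rewrite openE => -[x y] /= /eqP /hT.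
move=> [[A B] /= [/set_mem xA /set_mem yB] [oA oB /eqP AB0]].
exists (A, B); first by split; apply: open_nbhs_nbhs.
move=> [u v] [/= Au Bv] uv; have : (A `&` B) u by split; rewrite // uv.
by rewrite AB0.
Qed.

Lemma compatible_ball_open (X : topologicalType) (d : X -> X -> RR) :
  is_metric d -> metric_compatible d -> forall x r, open [set y | d x y < r].
Proof.
move=> [_ [_ [_ dtri]]] dc x r; apply/dc => y /= dxy.
by exists (r - d x y); split=> [|z dyz /=]; [lra|have := dtri x y z; lra].
Qed.

Lemma polish_hausdorff (X : topologicalType) : polish X -> hausdorff_space X.
Proof.
move=> [_ [d [dm [dc _]]]]; have [d0 [deq [dsym dtri]]] := dm.
rewrite open_hausdorff => x y /eqP xy.
have dxy : 0 < d x y by rewrite lt_neqAle d0 andbT; apply/eqP => /esym/deq.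
pose r := d x y / 2.
exists ([set u | d x u < r], [set v | d y v < r]).
  by split; rewrite inE /= (deq _ _).2 // /r; lra.
split; try exact: compatible_ball_open.
apply/eqP/seteqP; split=> // u [/= xu yu].
by have := dtri x u y; rewrite (dsym u y) /r in xu yu *; lra.
Qed.

Section BorelComparisons.
Variables (T U : topologicalType) (f g : T -> U).
Hypotheses (fc : continuous f) (gc : continuous g).

Lemma borel_neq : hausdorff_space U -> borel [set w | f w <> g w].
Proof.
move=> hU; apply: (borel_preimage (continuous_pair fc gc) (A := [set p | p.1 <> p.2])).
by apply: borel_open; exact: hausdorff_open_neq.
Qed.

Lemma borel_eq : hausdorff_space U -> borel [set w | f w = g w].
Proof.
move=> hU; have -> : [set w | f w = g w] = [set w | ~ f w <> g w].
  by apply/seteqP; split=> w /=; [move=> -> |exact: contrapT].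
by apply: borel_not; exact: borel_neq.
Qed.

Lemma borel_edge (G : set (U * U)) : borel G -> borel [set w | G (f w, g w)].
Proof. exact: (borel_preimage (continuous_pair fc gc)). Qed.

End BorelComparisons.

Section Lines.
Variable X : Type.

Definition line (z : nat -> X) (b : bool) (i : nat) : nat -> X :=
  fun k => z (Cantor.to_nat ((b + i.*2)%N, k)).

Definition interleave (F : bool -> nat -> nat -> X) : nat -> X :=
  fun n => let: (t, k) := Cantor.of_nat n in F (odd t) t./2 k.

Lemma line_interleave F : line (interleave F) = F.
Proof.
apply/funext => b; apply/funext => i; apply/funext => k.
by rewrite /line /interleave Cantor.cancel_of_to oddD oddb odd_double addbF half_bit_double.
Qed.

Lemma line_cover z n : exists b i k, z n = line z b i k.
Proof.
rewrite -(Cantor.cancel_to_of n); case: (Cantor.of_nat n) => t k.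
by exists (odd t), t./2, k; rewrite /line odd_double_half.
Qed.

End Lines.

Section JumpGraph.
Variables (X : Type) (E : X -> X -> Prop).
Hypothesis hE : is_equivalence_rel E.

Let Erefl x : E x x. Proof. by have [refl _] := hE; apply: refl. Qed.
Let Esym x y : E x y -> E y x. Proof. by have [_ [sym _]] := hE; apply: sym. Qed.
Let Etrans x y z : E x y -> E y z -> E x z.
Proof. by have [_ [_ trans]] := hE; apply: trans. Qed.

Definition meets_classes (x y : nat -> X) := forall i, exists j, E (x i) (y j).

Lemma range_classesP (x y : nat -> X) :
  range (fun i => (E (x i) : set X)) = range (fun i => (E (y i) : set X)) <->
  meets_classes x y /\ meets_classes y x.
Proof.
have classE a b : E a b -> (E a : set X) = E b.
  by move=> ab; apply/seteqP; split=> u /=; [apply: Etrans; exact: Esym|exact: Etrans].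
split=> [xy|[xy yx]].
  split=> i; [have : range (fun i => (E (x i) : set X)) (E (x i)) by exists i|
              have : range (fun i => (E (y i) : set X)) (E (y i)) by exists i].
    by rewrite xy => -[j _ Eyx]; exists j; rewrite -Eyx.
  by rewrite -xy => -[j _ Exy]; exists j; rewrite -Exy.
apply/seteqP; split=> _ [i _ <-].
  by have [j /classE] := xy i; exists j.
by have [j /classE] := yx i; exists j.
Qed.

Variable G : set (X * X).
Hypothesis hGE : forall x y, connectedness G x y <-> E x y.

Definition walk (f : nat -> X) := forall k, f k.+1 = f k \/ G (f k, f k.+1).

Lemma walk_related f m n : walk f -> E (f m) (f n).
Proof.
move=> wf; suff from0 k : E (f 0%N) (f k) by apply: Etrans (Esym (from0 m)) (from0 n).
elim: k => [|k IH] //; case: (wf k) => [-> //|Gk].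
by apply: Etrans IH _; apply/hGE/rt_step.
Qed.

Lemma related_walk a b : E a b -> exists f, f 0%N = a /\ walk f /\ exists K, f K = b.
Proof.
move=> /hGE ab; elim: (clos_rt_rt1n _ _ _ _ ab) => [u|u v w uv _ [f [f0 [wf [K fK]]]]].
  by exists (fun _ => u); split=> //; split=> [k|]; [left|exists 0%N].
exists (fun k => if k is k'.+1 then f k' else u); split=> //; split.
  by case=> [|k] /=; [right; rewrite f0|exact: wf].
by exists K.+1.
Qed.

Lemma walks_between x y : meets_classes x y ->
  exists (f : nat -> nat -> X) (s : nat -> nat),
    forall i, f i 0%N = x i /\ walk (f i) /\ exists K, f i K = y (s i).
Proof.
move=> xy; have walk_from i : exists jf : nat * (nat -> X),
    jf.2 0%N = x i /\ walk jf.2 /\ exists K, jf.2 K = y jf.1.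
  by have [j /related_walk [f hf]] := xy i; exists (j, f).
have [c hc] := choice walk_from.
by exists (fun i => (c i).2), (fun i => (c i).1).
Qed.

(* Whichever family carries [x], every line meets a line of it, which keeps
   all of [z] inside the classes of [x]. *)
Definition witness (x z : nat -> X) :=
  (forall b i, walk (line z b i) /\ exists j k m, line z b i k = line z (~~ b) j m) /\
  exists b, forall i, exists k, line z b i k = x i.

Lemma witness_classes x z : witness x z ->
  range (fun i => (E (x i) : set X)) = range (fun i => (E (z i) : set X)).
Proof.
move=> [lines [b onx]].
have onb i k : E (line z b i k) (x i).
  have [k' <-] := onx i; exact/walk_related/(lines b i).1.
have near_x b' i k : exists j, E (line z b' i k) (x j).
  have [wi [j [k' [m meet]]]] := lines b' i.
  have [->|nbb] := eqVneq b' b; first by exists i; exact: onb.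
  have nb : ~~ b' = b by move: nbb; case: (b'); case: (b).
  by exists j; apply: Etrans (walk_related k k' wi) _; rewrite meet nb; exact: onb.
apply/range_classesP; split=> [i|n].
  by have [k xi] := onx i; exists (Cantor.to_nat ((b + i.*2)%N, k)); rewrite -xi.
by have [b' [i [k ->]]] := line_cover z n; exact: near_x.
Qed.

Lemma common_witness x y :
  range (fun i => (E (x i) : set X)) = range (fun i => (E (y i) : set X)) ->
  exists z, witness x z /\ witness y z.
Proof.
move=> /range_classesP [/walks_between [f [s hf]] /walks_between [g [t hg]]].
exists (interleave (fun b => if b then g else f)); rewrite /witness line_interleave.
have lines : forall b i, walk ((if b then g else f) i) /\
    exists j k m, (if b then g else f) i k = (if ~~ b then g else f) j m.
  case=> i /=.
    have [_ [wg [K gK]]] := hg i; split=> //; exists (t i), K, 0%N.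
    by rewrite gK; case: (hf (t i)).
  have [_ [wf [K fK]]] := hf i; split=> //; exists (s i), K, 0%N.
  by rewrite fK; case: (hg (s i)).
split; split=> //; [exists false|exists true] => i; exists 0%N.
  by case: (hf i).
by case: (hg i).
Qed.

Definition jump_graph : set ((nat -> X) * (nat -> X)) :=
  [set w | w.1 <> w.2 /\ (witness w.1 w.2 \/ witness w.2 w.1)].

Lemma jump_graph_connectedness x y : connectedness jump_graph x y <->
  range (fun i => (E (x i) : set X)) = range (fun i => (E (y i) : set X)).
Proof.
split.
  elim=> [u v [_ [/witness_classes|/witness_classes/esym]]|u|u v w _ -> _ ->] //.
move=> /common_witness [z [xz yz]]; apply: (@rt_trans _ _ _ z).
  have [<-|xz'] := pselect (x = z); first exact: rt_refl.
  by apply: rt_step; split; [exact: xz'|left].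
have [<-|yz'] := pselect (y = z); first exact: rt_refl.
by apply: rt_step; split; [move=> /esym|right].
Qed.

End JumpGraph.

Section BorelJumpGraph.
Variables (X : topologicalType) (G : set (X * X)).
Hypotheses (hX : hausdorff_space X) (hG : borel G).

Lemma borel_witness (T : topologicalType) (p q : T -> {ptws nat -> X}) :
  continuous p -> continuous q -> borel [set w | witness G (p w) (q w)].
Proof.
move=> pc qc; rewrite /witness /walk /line.
repeat first [ apply: borel_and | apply: borel_or | (apply: borel_all => ?) |
  (apply: borel_ex => ?) | apply: borel_eq | apply: borel_edge |
  exact: continuous_coord | assumption ].
Qed.

Lemma borel_jump_graph :
  borel (jump_graph G : set ({ptws nat -> X} * {ptws nat -> X})).
Proof.
pose P := {ptws nat -> X}.
change (borel [set w : P * P | w.1 <> w.2 /\ (witness G w.1 w.2 \/ witness G w.2 w.1)]).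
have fstc : continuous (@fst P P) by move=> ?; exact: cvg_fst.
have sndc : continuous (@snd P P) by move=> ?; exact: cvg_snd.
apply: borel_and; last by apply: borel_or; exact: borel_witness.
by apply: borel_neq => //; exact: hausdorff_product.
Qed.

End BorelJumpGraph.

Theorem theorem7p6 (X : topologicalType) (E : X -> X -> Prop) :
  polish X -> is_equivalence_rel E -> borel_graphable E ->
  borel_graphable (fs_jump E).
Proof.
move=> /polish_hausdorff hX hE [G [hG [_ [_ hGE]]]].
exists (jump_graph G); split; first exact: borel_jump_graph.
split; first by move=> x y [xy [xz|zx]]; split; [move=> /esym|right|move=> /esym|left].
split; first by move=> x [].
exact: jump_graph_connectedness.
Qed.
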